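(* For all $n\ge1$ and all $k_1,\dots,k_n\in\mathbb N$, $H_{k_1}\circ\cdots\circ H_{k_n}(\partial\Delta)$ is the boundary of a triangle each of whose sides has negative slope.
   Context: $\Delta=\{(u,v)\in\mathbb R^2:u\ge0,v\ge0,u+v\le1\}$. For $k\in\mathbb N$, $H_k:\Delta\to\Delta$ is $H_k(u,v)=\frac{1}{k(1-v)+1-u}(v,1-v)$ (a projective map, sending line segments to line segments). A vertical side is regarded as having slope $-\infty$, which counts as negative. *)

From Stdlib Require Import Reals List.
Open Scope R_scope.

Definition Delta (p : R * R) : Prop :=
  0 <= fst p /\ 0 <= snd p /\ fst p + snd p <= 1.

Definition bdDelta (p : R * R) : Prop :=
  Delta p /\ (fst p = 0 \/ snd p = 0 \/ fst p + snd p = 1).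

Definition H (k : nat) (p : R * R) : R * R :=
  let u := fst p in let v := snd p in
  let d := INR k * (1 - v) + 1 - u in
  (v / d, (1 - v) / d).

(* Hcomp [k1; ...; kn] = H_{k1} o ... o H_{kn}. *)
Definition Hcomp (ks : list nat) : R * R -> R * R :=
  fold_right (fun k f => fun p => H k (f p)) (fun p => p) ks.

Definition on_segment (a b z : R * R) : Prop :=
  exists t, 0 <= t <= 1 /\
    z = ((1 - t) * fst a + t * fst b, (1 - t) * snd a + t * snd b).

Definition noncollinear (a b c : R * R) : Prop :=
  (fst b - fst a) * (snd c - snd a) - (snd b - snd a) * (fst c - fst a) <> 0.

Definition on_triangle_boundary (a b c z : R * R) : Prop :=
  on_segment a b z \/ on_segment b c z \/ on_segment c a z.

(* The segment [a,b] has negative slope; a vertical side has slope -oo,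
   which counts as negative. *)
Definition negative_slope (a b : R * R) : Prop :=
  fst a = fst b \/ (snd b - snd a) / (fst b - fst a) < 0.

(* Each H_k is a projective map whose denominator d is positive on Delta, so it maps
   a segment [p, q] of Delta onto [H_k p, H_k q]: the point (1-t) p + t q goes to the
   point of parameter t b / ((1-t) a + t b), where a = d p and b = d q.  Such
   reparametrisations are increasing bijections of [0, 1] and compose, so
   H_{k1} o ... o H_{kn} maps the three sides of Delta onto the three sides of the
   triangle spanned by the images of the vertices.
   For the vertices, write the composite as F o H_k: H_k sends (1,0), (0,1), (0,0) to
   (0, 1/k), (1,0), (0, 1/(k+1)), so the new vertices are F(1,0) and two points of the
   side F[(0,0), (0,1)].  By induction, the image of (0,0) lies strictly between the
   images of (1,0) and (0,1) in height and weakly between them in abscissa, which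
   forces all three slopes to be negative. *)

From Stdlib Require Import Reals List Lra Psatz.
Open Scope R_scope.

Definition lerp (p q : R * R) (t : R) : R * R :=
  ((1 - t) * fst p + t * fst q, (1 - t) * snd p + t * snd q).

Lemma on_segment_lerp a b z :
  on_segment a b z <-> exists t, 0 <= t <= 1 /\ z = lerp a b t.
Proof. reflexivity. Qed.

Lemma lerp_swap p q t : lerp p q t = lerp q p (1 - t).
Proof. unfold lerp; f_equal; ring. Qed.

Lemma lerp_0 p q : lerp p q 0 = p.
Proof. destruct p; unfold lerp; simpl; f_equal; ring. Qed.

Lemma lerp_1 p q : lerp p q 1 = q.
Proof. destruct q; unfold lerp; simpl; f_equal; ring. Qed.

Definition reparam (a b t : R) : R := t * b / ((1 - t) * a + t * b).

Lemma convex_comb_gt0 a b t : 0 < a -> 0 < b -> 0 <= t <= 1 -> 0 < (1 - t) * a + t * b.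
Proof. intros; nra. Qed.

Section Reparam.
Variables a b : R.
Hypotheses (a_gt0 : 0 < a) (b_gt0 : 0 < b).

Lemma reparam_0 : reparam a b 0 = 0.
Proof. unfold reparam; field; lra. Qed.

Lemma reparam_1 : reparam a b 1 = 1.
Proof. unfold reparam; field; lra. Qed.

Lemma reparam_diag t : reparam a a t = t.
Proof. unfold reparam; field; lra. Qed.

Lemma reparam_lt s t : 0 <= s -> s < t -> t <= 1 -> reparam a b s < reparam a b t.
Proof.
  intros Hs Hst Ht. unfold reparam.
  pose proof (convex_comb_gt0 a b s a_gt0 b_gt0 ltac:(lra)).
  pose proof (convex_comb_gt0 a b t a_gt0 b_gt0 ltac:(lra)).
  apply Rlt_0_minus.
  replace (t * b / ((1 - t) * a + t * b) - s * b / ((1 - s) * a + s * b))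
    with (a * b * (t - s) / (((1 - s) * a + s * b) * ((1 - t) * a + t * b)))
    by (field; lra).
  apply Rdiv_lt_0_compat.
  - apply Rmult_lt_0_compat; [nra | lra].
  - nra.
Qed.

Lemma reparam_le s t : 0 <= s -> s <= t -> t <= 1 -> reparam a b s <= reparam a b t.
Proof.
  intros Hs Hst Ht. destruct (Rle_lt_or_eq _ _ Hst) as [Hlt | ->].
  - left; apply reparam_lt; assumption.
  - right; reflexivity.
Qed.

Lemma reparam_range t : 0 <= t <= 1 -> 0 <= reparam a b t <= 1.
Proof.
  intros Ht.
  pose proof (reparam_le 0 t ltac:(lra) ltac:(lra) ltac:(lra)) as Hlo.
  pose proof (reparam_le t 1 ltac:(lra) ltac:(lra) ltac:(lra)) as Hhi.
  rewrite reparam_0 in Hlo; rewrite reparam_1 in Hhi; lra.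
Qed.

Lemma reparam_comp a' b' t : 0 < a' -> 0 < b' -> 0 <= t <= 1 ->
  reparam a' b' (reparam a b t) = reparam (a * a') (b * b') t.
Proof.
  intros Ha' Hb' Ht.
  pose proof (convex_comb_gt0 a b t a_gt0 b_gt0 Ht).
  pose proof (convex_comb_gt0 (a * a') (b * b') t
    (Rmult_lt_0_compat _ _ a_gt0 Ha') (Rmult_lt_0_compat _ _ b_gt0 Hb') Ht).
  unfold reparam; field; lra.
Qed.

End Reparam.

Definition segment_map_on (D : R * R -> Prop) (F : R * R -> R * R) : Prop :=
  forall p q, D p -> D q -> exists a b, 0 < a /\ 0 < b /\
    forall t, 0 <= t <= 1 -> F (lerp p q t) = lerp (F p) (F q) (reparam a b t).

Lemma segment_map_id D : segment_map_on D (fun p => p).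
Proof.
  intros p q _ _. exists 1, 1. split; [lra | split; [lra |]].
  intros t _. rewrite reparam_diag by lra. reflexivity.
Qed.

Lemma segment_map_comp (D E : R * R -> Prop) F G :
  segment_map_on E F -> segment_map_on D G -> (forall p, D p -> E (G p)) ->
  segment_map_on D (fun p => F (G p)).
Proof.
  intros HF HG GDE p q Dp Dq.
  destruct (HG p q Dp Dq) as [a [b [Ha [Hb HGpq]]]].
  destruct (HF (G p) (G q) (GDE p Dp) (GDE q Dq)) as [a' [b' [Ha' [Hb' HFpq]]]].
  exists (a * a'), (b * b'). split; [nra | split; [nra |]].
  intros t Ht.
  rewrite HGpq, HFpq, reparam_comp by (try apply reparam_range; assumption).
  reflexivity.
Qed.

Lemma segment_map_image D F p q z :
  segment_map_on D F -> D p -> D q ->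
  (exists y, on_segment p q y /\ z = F y) <-> on_segment (F p) (F q) z.
Proof.
  intros HF Dp Dq. destruct (HF p q Dp Dq) as [a [b [Ha [Hb HFpq]]]].
  split.
  - intros [y [[t [Ht ->]] ->]]. exists (reparam a b t).
    split; [apply reparam_range; assumption |].
    exact (HFpq t Ht).
  - intros [s [Hs ->]]. exists (lerp p q (reparam b a s)).
    split; [exists (reparam b a s); split; [apply reparam_range |]; easy |].
    rewrite HFpq, reparam_comp, (Rmult_comm b a), reparam_diag by
      (try apply reparam_range; try apply Rmult_lt_0_compat; assumption).
    reflexivity.
Qed.

Lemma segment_map_triangle_boundary D F a b c z :
  segment_map_on D F -> D a -> D b -> D c ->
  (exists y, on_triangle_boundary a b c y /\ z = F y) <->
  on_triangle_boundary (F a) (F b) (F c) z.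
Proof.
  intros HF Da Db Dc. unfold on_triangle_boundary.
  rewrite <- !(segment_map_image D F) by assumption.
  firstorder.
Qed.

Definition H_denom (k : nat) (p : R * R) : R := INR k * (1 - snd p) + 1 - fst p.

Lemma H_denom_ge1 k p : (1 <= k)%nat -> Delta p -> 1 <= H_denom k p.
Proof.
  intros Hk Hp. apply le_INR in Hk. simpl in Hk.
  destruct p as [u v]; unfold Delta, H_denom in *; simpl in *. nra.
Qed.

Lemma H_denom_lerp k p q t :
  H_denom k (lerp p q t) = (1 - t) * H_denom k p + t * H_denom k q.
Proof. unfold H_denom, lerp; simpl; ring. Qed.

Lemma H_Delta k p : (1 <= k)%nat -> Delta p -> Delta (H k p).
Proof.
  intros Hk Hp. pose proof (H_denom_ge1 k p Hk Hp) as Hd.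
  destruct p as [u v]; unfold Delta, H, H_denom in *; simpl in *.
  set (d := INR k * (1 - v) + 1 - u) in *.
  assert (Hinv : 0 < / d <= 1).
  { split; [apply Rinv_0_lt_compat; lra |].
    rewrite <- Rinv_1; apply Rinv_le_contravar; lra. }
  unfold Rdiv; nra.
Qed.

Lemma H_segment_map k : (1 <= k)%nat -> segment_map_on Delta (H k).
Proof.
  intros Hk p q Hp Hq.
  pose proof (H_denom_ge1 k p Hk Hp) as Hdp.
  pose proof (H_denom_ge1 k q Hk Hq) as Hdq.
  exists (H_denom k p), (H_denom k q). split; [lra | split; [lra |]].
  intros t Ht.
  pose proof (convex_comb_gt0 (H_denom k p) (H_denom k q) t ltac:(lra) ltac:(lra) Ht) as Hd.
  pose proof (H_denom_lerp k p q t) as Hdt.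
  destruct p as [u1 v1], q as [u2 v2].
  unfold H, H_denom, lerp, reparam in *; simpl in *.
  f_equal; field; lra.
Qed.

Lemma Hcomp_snoc ks k p : Hcomp (ks ++ k :: nil) p = Hcomp ks (H k p).
Proof. induction ks as [| k' ks IH]; simpl; [reflexivity |]. now rewrite IH. Qed.

Lemma Hcomp_Delta ks p :
  (forall k, In k ks -> (1 <= k)%nat) -> Delta p -> Delta (Hcomp ks p).
Proof.
  induction ks as [| k ks IH]; simpl; intros Hks Hp; [assumption |].
  apply H_Delta; [apply Hks; left; reflexivity |].
  apply IH; [intros; apply Hks; right |]; assumption.
Qed.

Lemma Hcomp_segment_map ks :
  (forall k, In k ks -> (1 <= k)%nat) -> segment_map_on Delta (Hcomp ks).
Proof.
  induction ks as [| k ks IH]; simpl; intros Hks; [apply segment_map_id |].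
  assert (Hks' : forall k', In k' ks -> (1 <= k')%nat)
    by (intros; apply Hks; right; assumption).
  apply segment_map_comp with (E := Delta).
  - apply H_segment_map, Hks; left; reflexivity.
  - apply IH, Hks'.
  - intros p; apply Hcomp_Delta, Hks'.
Qed.

Definition descends (p q : R * R) : Prop := fst p <= fst q /\ snd q < snd p.

Definition decreasing_path (a c b : R * R) : Prop :=
  (descends a c /\ descends c b) \/ (descends b c /\ descends c a).

Lemma descends_trans p q r : descends p q -> descends q r -> descends p r.
Proof. unfold descends; lra. Qed.

Lemma descends_lerp p q s t :
  descends p q -> s < t -> descends (lerp p q s) (lerp p q t).
Proof. destruct p, q; unfold descends, lerp; simpl; intros; nra. Qed.

Lemma negative_slope_sym p q : negative_slope p q -> negative_slope q p.
Proof.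
  unfold negative_slope. intros [E | Hs]; [left; congruence | right].
  destruct (Req_dec (fst p) (fst q)) as [E | NE].
  - rewrite E, Rminus_diag, Rdiv_0_r in Hs; lra.
  - replace ((snd p - snd q) / (fst p - fst q)) with ((snd q - snd p) / (fst q - fst p))
      by (field; lra).
    assumption.
Qed.

Lemma descends_negative_slope p q : descends p q -> negative_slope p q.
Proof.
  unfold descends, negative_slope. intros [Hx Hy].
  destruct (Rle_lt_or_eq _ _ Hx) as [Hlt | E]; [right | left; assumption].
  apply Rdiv_neg_pos; lra.
Qed.

Lemma decreasing_path_negative_slopes a b c :
  decreasing_path a c b ->
  negative_slope a b /\ negative_slope b c /\ negative_slope c a.
Proof.
  intros [[Hac Hcb] | [Hbc Hca]].
  - repeat split; [| apply negative_slope_sym ..]; apply descends_negative_slope;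
      [apply descends_trans with c | |]; assumption.
  - repeat split; [apply negative_slope_sym | |]; apply descends_negative_slope;
      [apply descends_trans with c | |]; assumption.
Qed.

Lemma decreasing_path_lerp a b c s t :
  decreasing_path a c b -> 0 < s < t ->
  decreasing_path (lerp c b t) (lerp c b s) a.
Proof.
  intros [[Hac Hcb] | [Hbc Hca]] Hst; [right | left].
  - split; [| apply descends_lerp; [assumption | lra]].
    apply descends_trans with c; [assumption |].
    rewrite <- (lerp_0 c b) at 1. apply descends_lerp; [assumption | lra].
  - split.
    + rewrite !(lerp_swap c b). apply descends_lerp; [assumption | lra].
    + apply descends_trans with c; [| assumption].
      pose proof (descends_lerp b c (1 - s) 1 Hbc ltac:(lra)) as Hsc.
      rewrite lerp_1, <- lerp_swap in Hsc. exact Hsc.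
Qed.

Lemma noncollinear_lerp a b c s t :
  noncollinear a b c -> s <> t -> noncollinear (lerp c b t) a (lerp c b s).
Proof.
  unfold noncollinear. intros Habc Hst E. apply Habc.
  (* the signed area gets multiplied by s - t *)
  apply (Rmult_eq_reg_l (s - t)); [| lra].
  rewrite Rmult_0_r, <- E. unfold lerp; simpl; ring.
Qed.

Lemma H_10 k : (1 <= k)%nat -> H k (1, 0) = lerp (0, 0) (0, 1) (/ INR k).
Proof.
  intros Hk. apply le_INR in Hk. simpl in Hk.
  unfold H, lerp; simpl; f_equal; field; lra.
Qed.

Lemma H_01 k : H k (0, 1) = (1, 0).
Proof. unfold H; simpl; f_equal; field. Qed.

Lemma H_00 k : H k (0, 0) = lerp (0, 0) (0, 1) (/ (INR k + 1)).
Proof. pose proof (pos_INR k) as Hk. unfold H, lerp; simpl; f_equal; field; lra. Qed.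

Lemma bdDelta_iff p : bdDelta p <-> on_triangle_boundary (1, 0) (0, 1) (0, 0) p.
Proof.
  unfold on_triangle_boundary. rewrite !on_segment_lerp.
  destruct p as [u v]; unfold bdDelta, Delta, lerp; simpl. split.
  - intros [Hp [E | [E | E]]].
    + right; left. exists (1 - v). split; [lra | f_equal; lra].
    + right; right. exists u. split; [lra | f_equal; lra].
    + left. exists v. split; [lra | f_equal; lra].
  - intros [[t [Ht E]] | [[t [Ht E]] | [t [Ht E]]]]; injection E as -> ->; lra.
Qed.

Lemma Hcomp_vertices ks :
  ks <> nil -> (forall k, In k ks -> (1 <= k)%nat) ->
  noncollinear (Hcomp ks (1, 0)) (Hcomp ks (0, 1)) (Hcomp ks (0, 0)) /\
  decreasing_path (Hcomp ks (1, 0)) (Hcomp ks (0, 0)) (Hcomp ks (0, 1)).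
Proof.
  induction ks as [| k ks IH] using rev_ind; [contradiction |].
  intros _ Hks.
  assert (Hk : (1 <= k)%nat) by (apply Hks, in_or_app; right; left; reflexivity).
  assert (Hks' : forall k', In k' ks -> (1 <= k')%nat)
    by (intros; apply Hks, in_or_app; left; assumption).
  pose proof (le_INR 1 k Hk) as HkR; simpl in HkR.
  assert (Hinv : 0 < / (INR k + 1) < / INR k)
    by (split; [apply Rinv_0_lt_compat | apply Rinv_lt_contravar]; nra).
  rewrite !Hcomp_snoc, H_10, H_01, H_00 by assumption.
  destruct ks as [| k0 ks].
  - simpl; unfold noncollinear, decreasing_path, descends, lerp; simpl.
    split; [nra | left; lra].
  - destruct (IH ltac:(discriminate) Hks') as [Hnc Hpath].
    destruct (Hcomp_segment_map _ Hks' (0, 0) (0, 1)) as [a [b [Ha [Hb HF]]]];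
      [unfold Delta; simpl; lra .. |].
    assert (Hk1 : 0 <= / INR k <= 1)
      by (split; [| rewrite <- Rinv_1; apply Rinv_le_contravar]; lra).
    rewrite !HF by lra.
    pose proof (reparam_lt a b Ha Hb 0 (/ (INR k + 1)) ltac:(lra) ltac:(lra) ltac:(lra))
      as Hf2.
    pose proof (reparam_lt a b Ha Hb (/ (INR k + 1)) (/ INR k)
      ltac:(lra) ltac:(lra) ltac:(lra)) as Hf21.
    rewrite reparam_0 in Hf2 by assumption.
    split.
    + apply noncollinear_lerp; [assumption | lra].
    + apply decreasing_path_lerp; [assumption | lra].
Qed.

Theorem proposition3p5 (ks : list nat) :
  (1 <= length ks)%nat ->
  (forall k, In k ks -> (1 <= k)%nat) ->
  exists a b c : R * R,
    noncollinear a b c /\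
    negative_slope a b /\ negative_slope b c /\ negative_slope c a /\
    (forall z : R * R,
       (exists p, bdDelta p /\ z = Hcomp ks p) <-> on_triangle_boundary a b c z).
Proof.
  intros Hlen Hks.
  assert (Hne : ks <> nil) by (intros ->; inversion Hlen).
  destruct (Hcomp_vertices ks Hne Hks) as [Hnc Hpath].
  exists (Hcomp ks (1, 0)), (Hcomp ks (0, 1)), (Hcomp ks (0, 0)).
  destruct (decreasing_path_negative_slopes _ _ _ Hpath) as [Hab [Hbc Hca]].
  do 4 (split; [assumption |]).
  intros z. setoid_rewrite bdDelta_iff.
  apply segment_map_triangle_boundary with Delta;
    [apply Hcomp_segment_map, Hks | unfold Delta; simpl; lra ..].
Qed.
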